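(* Let $f_0\colon X\hookrightarrow Y_0$ and $f_1\colon X\hookrightarrow Y_1$ be embeddings in $\mathbf{MetCH_{sep}}$ and let $\lambda_0\colon Y_0\to P$, $\lambda_1\colon Y_1\to P$ (with $\lambda_0\circ f_0=\lambda_1\circ f_1$) be their pushout in $\mathbf{MetCH_{sep}}$. Then for all $i,j\in\{0,1\}$, $u\in Y_i$, $v\in Y_j$: $$d_P(\lambda_i(u),\lambda_j(v))=\begin{cases} d_{Y_i}(u,v) & \text{if } i=j,\\ \inf_{x\in X}\big(d_{Y_i}(u,f_i(x))+d_{Y_j}(f_j(x),v)\big) & \text{if } i\neq j.\end{cases}$$
   Context: A metric on a set $X$ is a map $d\colon X\times X\to[0,\infty]$ with $d(x,x)=0$ and $d(x,z)\le d(x,y)+d(y,z)$ (not necessarily symmetric, $\infty$ allowed); separated means $d(x,y)=0=d(y,x)$ implies $x=y$. A separated metric compact Hausdorff space is a compact Hausdorff space with a separated metric $d\colon X\times X\to[0,\infty]$ continuous with respect to the upper topology on $[0,\infty]$ (open sets $]u,\infty]$, plus $\emptyset$ and $[0,\infty]$). $\mathbf{MetCH_{sep}}$: these spaces with continuous non-expansive maps as morphisms. An embedding is an injective morphism $f$ with $d_X(x,y)=d_Y(f(x),f(y))$ for all $x,y$. *)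

From HB Require Import structures.
From mathcomp Require Import all_boot all_order all_algebra.
From mathcomp Require Import all_classical all_reals all_analysis.
Set Implicit Arguments. Unset Strict Implicit. Unset Printing Implicit Defensive.
Import Order.TTheory GRing.Theory Num.Theory.
Local Open Scope classical_set_scope.
Local Open Scope ring_scope.
Local Open Scope ereal_scope.

(* Objects of MetCH_sep: compact Hausdorff spaces with a separated
   (possibly asymmetric, possibly infinite) metric d : X*X -> [0,+oo]
   which is continuous for the upper topology on [0,+oo], i.e.
   {(x,y) | u < d(x,y)} is open in X*X for every u. *)
Record metch (R : realType) := MetCH {
  mc_car :> topologicalType;
  mc_d : mc_car -> mc_car -> \bar R;
  mc_hausdorff : hausdorff_space mc_car;
  mc_compact : compact [set: mc_car];
  mc_d_ge0 : forall x y, 0 <= mc_d x y;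
  mc_d_refl : forall x, mc_d x x = 0;
  mc_d_tri : forall x y z, mc_d x z <= mc_d x y + mc_d y z;
  mc_d_sep : forall x y, mc_d x y = 0 -> mc_d y x = 0 -> x = y;
  mc_d_usc : forall u : R, open [set p : mc_car * mc_car | u%:E < mc_d p.1 p.2]
}.

Definition metch_mor (R : realType) (X Y : metch R) (f : X -> Y) : Prop :=
  continuous f /\ forall x y, @mc_d R Y (f x) (f y) <= @mc_d R X x y.

Definition metch_emb (R : realType) (X Y : metch R) (f : X -> Y) : Prop :=
  metch_mor f /\ injective f /\ forall x y, @mc_d R Y (f x) (f y) = @mc_d R X x y.

Definition metch_pushout (R : realType) (X Y0 Y1 P : metch R)
  (f0 : X -> Y0) (f1 : X -> Y1) (l0 : Y0 -> P) (l1 : Y1 -> P) : Prop :=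
  [/\ metch_mor l0, metch_mor l1, l0 \o f0 = l1 \o f1 &
    forall (Q : metch R) (g0 : Y0 -> Q) (g1 : Y1 -> Q),
      metch_mor g0 -> metch_mor g1 -> g0 \o f0 = g1 \o f1 ->
      exists! h : P -> Q, [/\ metch_mor h, h \o l0 = g0 & h \o l1 = g1]].

From HB Require Import structures.
From mathcomp Require Import all_boot all_order all_algebra.
From mathcomp Require Import all_classical all_reals all_analysis.
From mathcomp Require Import generic_quotient lra.
Set Implicit Arguments. Unset Strict Implicit. Unset Printing Implicit Defensive.
Import Order.TTheory GRing.Theory Num.Theory.
Local Open Scope classical_set_scope.
Local Open Scope ring_scope.
Local Open Scope ereal_scope.

(* The formula defines a distance on the disjoint sum Y0 + Y1: the distance of
   Y_i inside each summand and, across the summands, the length of the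
   shortest path through the common subspace X.  Two points are at distance
   zero from each other in both directions exactly when they are f0 x and f1 x
   for some x, so this distance descends to a separated metric on the quotient
   Q of the sum by that relation.  Compactness of X makes the cross distance
   lower semicontinuous and the quotient map closed, hence Q is an object of
   MetCH_sep and the two summand inclusions form a cocone of morphisms under
   f0, f1.  The non-expansive factorisation P -> Q bounds d_P from below by the
   formula, and the triangle inequality through lambda0 (f0 x) = lambda1 (f1 x)
   bounds it from above in any cocone. *)

Section ExtendedReals.
Variable R : realType.
Implicit Types (r : R) (u v z : \bar R).

Lemma lee_adde_inf z u (S : set (\bar R)) : 0 <= u -> (forall s, S s -> 0 <= s) ->
  (forall s, S s -> z <= u + s) -> z <= u + ereal_inf S.
Proof.
move=> u0 S0 zS; have inf0 : 0 <= ereal_inf S by apply/ereal_infP.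
case: u u0 zS => [u| |] // u0 zS; last by rewrite addye ?leey // gt_eqF // (lt_le_trans _ inf0).
rewrite addeC -leeBlDr //; apply/ereal_infP => s Ss.
by rewrite leeBlDr // addeC; exact: zS.
Qed.

Lemma lte_adde_split r u v : 0 <= u -> 0 <= v -> r%:E < u + v ->
  exists s : R, s%:E < u /\ (r - s)%:E < v.
Proof.
case: u => [u| |] u0; case: v => [v| |] v0 //; rewrite ?leeNy_eq // => ruv.
- exists (u - (u + v - r) / 2)%R; move: ruv; rewrite -EFinD !lte_fin => ?; lra.
- by exists (u - 1)%R; rewrite !lte_fin ltey; split => //; lra.
- by exists (r - v + 1)%R; rewrite !lte_fin ltey; split => //; lra.
- by exists 0%R; rewrite !ltey.
Qed.

Lemma lte_EFin_between r u : r%:E < u -> exists r' : R, (r < r')%R /\ r'%:E < u.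
Proof.
case: u => [u| |] // ru.
- by exists ((r + u) / 2)%R; move: ru; rewrite !lte_fin => ?; lra.
- by exists (r + 1)%R; rewrite ltey; split => //; lra.
Qed.

End ExtendedReals.

Lemma fst_continuous (T U : topologicalType) : continuous (@fst T U).
Proof. by move=> [t u]; exact: cvg_fst. Qed.

Lemma snd_continuous (T U : topologicalType) : continuous (@snd T U).
Proof. by move=> [t u]; exact: cvg_snd. Qed.

Lemma open_fibre_sub (X T : topologicalType) (g : X -> T) (W : set X) :
  compact [set: X] -> hausdorff_space T -> continuous g -> open W ->
  open [set t | forall x, g x = t -> W x].
Proof.
move=> cX hT gc oW.
have -> : [set t | forall x, g x = t -> W x] = ~` (g @` ~` W).
  apply/seteqP; split => t /=; first by move=> Wt [x nWx /Wt].
  by move=> nt x gxt; apply: contrapT => nWx; apply: nt; exists x.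
rewrite openC; apply: compact_closed => //.
apply: continuous_compact; first exact: continuous_subspaceT.
by apply: subclosed_compact cX _ => //; exact: open_closedC.
Qed.

Section LowerSemicontinuity.
Variable R : realType.

Lemma lower_semicontinuousD (T : topologicalType) (f g : T -> \bar R) :
  (forall t, 0 <= f t) -> (forall t, 0 <= g t) ->
  lower_semicontinuous f -> lower_semicontinuous g ->
  lower_semicontinuous (fun t => f t + g t).
Proof.
move=> f0 g0 lf lg t r /(lte_adde_split (f0 t) (g0 t)) [s [sf sg]].
have [U Ut Uf] := lf t s sf; have [V Vt Vg] := lg t _ sg.
exists (U `&` V); first exact: filterI.
move=> y [/Uf fy /Vg gy]; have -> : r%:E = s%:E + (r - s)%:E by rewrite -EFinD addrC subrK.
exact: lteD.
Qed.

Lemma lower_semicontinuous_ereal_inf (T X : topologicalType) (F : T -> X -> \bar R) :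
  compact [set: X] -> lower_semicontinuous (fun q : T * X => F q.1 q.2) ->
  lower_semicontinuous (fun t => ereal_inf [set F t x | x in [set: X]]).
Proof.
move=> cX lF t r /lte_EFin_between [r' [rr' r'F]].
have near_t (x : X) : \forall x' \near x & t' \near t, r'%:E < F t' x'.
  have /lF [V [[N M] /= [Nt Mx] NMV] VF] : r'%:E < F (t, x).1 (t, x).2.
    by apply: lt_le_trans r'F _; apply: ereal_inf_lbound; exists x.
  by exists (M, N) => // -[x' t'] [/= Mx' Nt']; apply: (VF (t', x')); exact: NMV.
have nearF : \forall t' \near t, forall x, r'%:E < F t' x.
  have := (compact_near_coveringP _).1 cX T (nbhs t) (fun t' x => r'%:E < F t' x).
  by move=> /(_ _ (fun x _ => near_t x)); apply: filterS => t' + x; apply.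
exists [set t' | forall x, r'%:E < F t' x] => // t' Ft'.
apply: (@lt_le_trans _ _ r'%:E); first by rewrite lte_fin.
by apply/ereal_infP => _ [x _ <-]; exact/ltW.
Qed.

Lemma compact_lower_semicontinuous_inf_gt0 (X : topologicalType) (f : X -> \bar R) :
  compact [set: X] -> lower_semicontinuous f -> (forall x, 0 < f x) ->
  0 < ereal_inf (range f).
Proof.
move=> cX lf f0.
have near_pos (x : X) : \forall x' \near x & e \near 0%R^'+, e%:E < f x'.
  have [s [s0 sf]] := lte_EFin_between (f0 x); have [V Vx Vf] := lf x s sf.
  exists (V, [set e | (e < s)%R]); first by split => //; exact: nbhs_right_lt.
  by case=> x' e /= [/Vf fx' es]; apply: lt_trans fx'; rewrite lte_fin.
have nearF : \forall e \near 0%R^'+, forall x, e%:E < f x.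
  by apply: filterS ((compact_near_coveringP _).1 cX _ _ _ _ (fun x _ => near_pos x)) => e + x; apply.
have [e [fe e0]] := filter_ex (filterI nearF (nbhs_right_gt 0%R)).
apply: (@lt_le_trans _ _ e%:E); first by rewrite lte_fin.
by apply/ereal_infP => _ [x _ <-]; exact/ltW/fe.
Qed.

Lemma lower_semicontinuous_separated_hausdorff (T : topologicalType)
    (d : T -> T -> \bar R) :
  (forall x y, 0 <= d x y) -> (forall x, d x x = 0) ->
  (forall x y, d x y = 0 -> d y x = 0 -> x = y) ->
  lower_semicontinuous (fun p : T * T => d p.1 p.2) -> hausdorff_space T.
Proof.
move=> d_ge0 d_refl d_sep ld.
have cluster_d0 x y : cluster (nbhs x) y -> d x y = 0.
  move=> xy; apply/eqP; rewrite eq_le d_ge0 andbT leNgt; apply/negP => d_pos.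
  have [V [[N N'] /= [Nx N'y] NN'V] Vd] := ld (x, y) 0%R d_pos.
  have [t [Nt N't]] := xy N N' Nx N'y.
  by have := Vd (t, t) (NN'V (t, t) (conj Nt N't)); rewrite /= d_refl ltxx.
move=> x y xy; apply: d_sep; apply: cluster_d0 => // A B yA xB.
by have [t [Bt At]] := xy B A xB yA; exists t.
Qed.

End LowerSemicontinuity.

Lemma mc_d_lsc (R : realType) (Y : metch R) (T : topologicalType) (g h : T -> Y) :
  continuous g -> continuous h -> lower_semicontinuous (fun t => mc_d (g t) (h t)).
Proof.
move=> gc hc; apply/lower_semicontinuousP => r.
apply: (@open_comp _ _ (fun t => (g t, h t)) [set p : Y * Y | r%:E < mc_d p.1 p.2]).
  by move=> t _; exact: (cvg_pair (gc t) (hc t)).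
exact: mc_d_usc.
Qed.

Section ZeroDistance.
Variables (R : realType) (T : Type) (d : T -> T -> \bar R).
Hypotheses (d_ge0 : forall u v, 0 <= d u v) (d_refl : forall u, d u u = 0)
  (d_tri : forall u v w, d u w <= d u v + d v w).

Lemma dist_eq0_trans u v w : d u v = 0 -> d v w = 0 -> d u w = 0.
Proof. by move=> uv vw; apply/le_anti; rewrite d_ge0 andbT -[0]adde0 -{1}uv -vw d_tri. Qed.

Definition dist0 : rel T := fun u v => `[< d u v = 0 /\ d v u = 0 >].

Lemma dist0P u v : dist0 u v <-> d u v = 0 /\ d v u = 0.
Proof. by split => /asboolP. Qed.

Lemma dist0_refl : reflexive dist0.
Proof. by move=> u; apply/dist0P; rewrite d_refl. Qed.

Lemma dist0_sym : symmetric dist0.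
Proof. by move=> u v; apply/idP/idP => /dist0P[? ?]; apply/dist0P. Qed.

Lemma dist0_trans : transitive dist0.
Proof.
move=> v u w /dist0P[uv vu] /dist0P[vw wv]; apply/dist0P.
by split; [exact: (dist_eq0_trans uv vw) | exact: (dist_eq0_trans wv vu)].
Qed.

Definition dist0_equiv : equiv_rel T := EquivRel dist0 dist0_refl dist0_sym dist0_trans.

Lemma dist0_invariant u u' v v' : dist0 u u' -> dist0 v v' -> d u v = d u' v'.
Proof.
move=> /dist0P[uu' u'u] /dist0P[vv' v'v]; apply/le_anti/andP; split.
- by apply: le_trans (d_tri u u' v) _; rewrite uu' add0e (le_trans (d_tri u' v' v)) // v'v adde0.
- by apply: le_trans (d_tri u' u v') _; rewrite u'u add0e (le_trans (d_tri u v v')) // vv' adde0.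
Qed.

End ZeroDistance.

Section CrossDistance.
Variables (R : realType) (X A B : metch R) (fa : X -> A) (fb : X -> B).
Local Notation dA := (@mc_d R A).
Local Notation dB := (@mc_d R B).

Definition cross_dist (a : A) (b : B) : \bar R :=
  ereal_inf [set dA a (fa x) + dB (fb x) b | x in [set: X]].

Lemma cross_summand_ge0 a b x : 0 <= dA a (fa x) + dB (fb x) b.
Proof. by rewrite adde_ge0 // mc_d_ge0. Qed.

Lemma cross_dist_ge0 a b : 0 <= cross_dist a b.
Proof. by apply/ereal_infP => _ [x _ <-]; exact: cross_summand_ge0. Qed.

Lemma cross_dist_le a b x : cross_dist a b <= dA a (fa x) + dB (fb x) b.
Proof. by apply: ereal_inf_lbound; exists x. Qed.

Lemma cross_distDl a a' b : cross_dist a b <= dA a a' + cross_dist a' b.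
Proof.
apply: lee_adde_inf => [||_ [x _ <-]]; first exact: mc_d_ge0.
  by move=> _ [x _ <-]; exact: cross_summand_ge0.
by apply: le_trans (cross_dist_le a b x) _; rewrite addeA leeD2r // mc_d_tri.
Qed.

Lemma cross_distDr a b b' : cross_dist a b <= cross_dist a b' + dB b' b.
Proof.
rewrite addeC; apply: lee_adde_inf => [||_ [x _ <-]]; first exact: mc_d_ge0.
  by move=> _ [x _ <-]; exact: cross_summand_ge0.
by apply: le_trans (cross_dist_le a b x) _; rewrite addeCA leeD2l // addeC mc_d_tri.
Qed.

Lemma cocone_dist_le_cross (P : metch R) (la : A -> P) (lb : B -> P) a b :
  metch_mor la -> metch_mor lb -> la \o fa = lb \o fb ->
  mc_d (la a) (lb b) <= cross_dist a b.
Proof.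
move=> [_ la_le] [_ lb_le] comm; apply/ereal_infP => _ [x _ <-].
apply: le_trans (mc_d_tri _ (la (fa x)) _) _; apply: leeD; first exact: la_le.
by have /= -> := congr1 (@^~ x) comm; exact: lb_le.
Qed.

End CrossDistance.

Section CrossDistanceOfEmbeddings.
Variables (R : realType) (X A B : metch R) (fa : X -> A) (fb : X -> B).
Local Notation dA := (@mc_d R A).
Local Notation dB := (@mc_d R B).
Hypothesis fa_fb_dist : forall x y, dA (fa x) (fa y) = dB (fb x) (fb y).

Lemma cross_dist_tri a b a' : dA a a' <= cross_dist fa fb a b + cross_dist fb fa b a'.
Proof.
rewrite addeC; apply: lee_adde_inf => [||_ [x _ <-]]; first exact: cross_dist_ge0.
  by move=> _ [x _ <-]; exact: cross_summand_ge0.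
rewrite addeC; apply: lee_adde_inf => [||_ [y _ <-]]; first exact: cross_summand_ge0.
  by move=> _ [y _ <-]; exact: cross_summand_ge0.
apply: le_trans (mc_d_tri a (fa x) a') _; rewrite -addeA leeD2l //.
apply: le_trans (mc_d_tri (fa x) (fa y) a') _; rewrite addeA leeD2r //.
by rewrite fa_fb_dist mc_d_tri.
Qed.

Lemma cross_dist_fb a x : cross_dist fa fb a (fb x) = dA a (fa x).
Proof.
apply/le_anti/andP; split; first by have := cross_dist_le fa fb a (fb x) x; rewrite mc_d_refl adde0.
by apply/ereal_infP => _ [y _ <-]; rewrite -fa_fb_dist mc_d_tri.
Qed.

Hypotheses (fa_cont : continuous fa) (fb_cont : continuous fb).

Lemma cross_dist_lsc : lower_semicontinuous (fun p : A * B => cross_dist fa fb p.1 p.2).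
Proof.
apply: lower_semicontinuous_ereal_inf; first exact: mc_compact.
apply: lower_semicontinuousD => [q|q||]; rewrite ?mc_d_ge0 //; apply: mc_d_lsc.
- by move=> q; apply: continuous_comp; exact: fst_continuous.
- by move=> q; apply: continuous_comp; [exact: snd_continuous | exact: fa_cont].
- by move=> q; apply: continuous_comp; [exact: snd_continuous | exact: fb_cont].
- by move=> q; apply: continuous_comp; [exact: fst_continuous | exact: snd_continuous].
Qed.

Lemma cross_dist0_attained a b : cross_dist fa fb a b = 0 ->
  exists x, dA a (fa x) = 0 /\ dB (fb x) b = 0.
Proof.
move=> cross0; apply: contrapT => not_attained.
have summand_gt0 x : 0 < dA a (fa x) + dB (fb x) b.
  rewrite lt0e cross_summand_ge0 andbT padde_eq0 ?mc_d_ge0 //.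
  by apply/negP => /andP[/eqP ? /eqP ?]; apply: not_attained; exists x.
have summand_lsc : lower_semicontinuous (fun x => dA a (fa x) + dB (fb x) b).
  apply: lower_semicontinuousD => [x|x||]; rewrite ?mc_d_ge0 //.
    by apply: mc_d_lsc; [exact: cst_continuous | exact: fa_cont].
  by apply: mc_d_lsc; [exact: fb_cont | exact: cst_continuous].
have := compact_lower_semicontinuous_inf_gt0 (@mc_compact R X) summand_lsc summand_gt0.
by rewrite -/(cross_dist fa fb a b) cross0 ltxx.
Qed.

End CrossDistanceOfEmbeddings.

Lemma cross_dist0_glued (R : realType) (X A B : metch R) (fa : X -> A) (fb : X -> B) :
  continuous fa -> continuous fb ->
  (forall x y, mc_d (fa x) (fa y) = mc_d (fb x) (fb y)) ->
  forall a b, cross_dist fa fb a b = 0 -> cross_dist fb fa b a = 0 ->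
  exists x, a = fa x /\ b = fb x.
Proof.
move=> fa_cont fb_cont fa_fb_dist a b.
move=> /(cross_dist0_attained fa_cont fb_cont) [x [ax xb]].
move=> /(cross_dist0_attained fb_cont fa_cont) [y [b_y ya]].
have d0 (Y : metch R) (u v w : Y) : mc_d u v = 0 -> mc_d v w = 0 -> mc_d u w = 0.
  exact: (dist_eq0_trans (@mc_d_ge0 R Y) (@mc_d_tri R Y)).
have xy : mc_d (fa x) (fa y) = 0 by rewrite fa_fb_dist (d0 _ _ b).
have yx : mc_d (fb y) (fb x) = 0 by rewrite -fa_fb_dist (d0 _ _ a).
by exists x; split; apply: mc_d_sep => //; [exact: (d0 _ _ (fa y)) | exact: (d0 _ _ (fb y))].
Qed.

Section Gluing.
Variables (R : realType) (X A B : metch R) (fa : X -> A) (fb : X -> B).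
Hypotheses (fa_emb : metch_emb fa) (fb_emb : metch_emb fb).
Local Notation dA := (@mc_d R A).
Local Notation dB := (@mc_d R B).

Let fa_cont : continuous fa. Proof. by case: fa_emb => -[]. Qed.
Let fb_cont : continuous fb. Proof. by case: fb_emb => -[]. Qed.
Let fa_fb_dist x y : dA (fa x) (fa y) = dB (fb x) (fb y).
Proof. by case: fa_emb => _ [_ ->]; case: fb_emb => _ [_ ->]. Qed.
Let fb_fa_dist x y : dB (fb x) (fb y) = dA (fa x) (fa y).
Proof. by rewrite fa_fb_dist. Qed.

Definition side (i : bool) : topologicalType := if i then A else B.
Definition sum_space := {i : bool & side i}.
Definition inA (a : A) : sum_space := existT side true a.
Definition inB (b : B) : sum_space := existT side false b.

Lemma sum_space_ind (P : sum_space -> Prop) :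
  (forall a, P (inA a)) -> (forall b, P (inB b)) -> forall z, P z.
Proof. by move=> PA PB [[] t]; [exact: PA | exact: PB]. Qed.

Definition sum_map (T : Type) (ga : A -> T) (gb : B -> T) (z : sum_space) : T :=
  match z with existT true a => ga a | existT false b => gb b end.

Definition sum_dist (z w : sum_space) : \bar R :=
  match z, w with
  | existT true a, existT true a' => dA a a'
  | existT true a, existT false b => cross_dist fa fb a b
  | existT false b, existT true a => cross_dist fb fa b a
  | existT false b, existT false b' => dB b b'
  end.

Lemma sum_dist_ge0 z w : 0 <= sum_dist z w.
Proof.
by elim/sum_space_ind: z => ?; elim/sum_space_ind: w => ?; rewrite /= ?mc_d_ge0 ?cross_dist_ge0.
Qed.

Lemma sum_dist_refl z : sum_dist z z = 0.
Proof. by elim/sum_space_ind: z => ? /=; rewrite mc_d_refl. Qed.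

Lemma sum_dist_tri z w v : sum_dist z v <= sum_dist z w + sum_dist w v.
Proof.
elim/sum_space_ind: z => ?; elim/sum_space_ind: w => ?; elim/sum_space_ind: v => ? /=.
- exact: mc_d_tri.
- exact: cross_distDl.
- exact: cross_dist_tri.
- exact: cross_distDr.
- exact: cross_distDr.
- exact: cross_dist_tri.
- exact: cross_distDl.
- exact: mc_d_tri.
Qed.

Lemma sum_dist_lsc : lower_semicontinuous (fun p : sum_space * sum_space => sum_dist p.1 p.2).
Proof.
have lift i j (g : side i * side j -> \bar R) : lower_semicontinuous g ->
    (forall x y, sum_dist (existT side i x) (existT side j y) = g (x, y)) ->
    forall x y r, r%:E < sum_dist (existT side i x) (existT side j y) ->
    exists2 V, nbhs (existT side i x, existT side j y) V &
      forall p, V p -> r%:E < sum_dist p.1 p.2.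
  move=> lg gE x y r; rewrite gE => /lg [V [[N N'] /= [Nx N'y] NN'V] Vg].
  exists (existT side i @` N `*` existT side j @` N').
    by exists (existT side i @` N, existT side j @` N') => //; split; exact: existT_nbhs.
  by case=> _ _ [[x' Nx' <-] [y' N'y' <-]]; rewrite gE; apply: Vg; exact: (NN'V (x', y')).
have dist_lsc (Y : metch R) : lower_semicontinuous (fun p : Y * Y => mc_d p.1 p.2).
  exact: mc_d_lsc (@fst_continuous _ _) (@snd_continuous _ _).
case=> -[[] a] [[] b] r /=.
- exact: (lift true true _ (dist_lsc A)).
- exact: (lift true false _ (cross_dist_lsc fa_cont fb_cont)).
- exact: (lift false true _ (cross_dist_lsc fb_cont fa_cont)).
- exact: (lift false false _ (dist_lsc B)).
Qed.

Definition glued_space :=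
  quotient_topology {eq_quot dist0_equiv sum_dist_ge0 sum_dist_refl sum_dist_tri}%qT.
Definition glue : sum_space -> glued_space := \pi%qT.

Local Notation sum_dist0 := (dist0 sum_dist).

Lemma glueP z w : glue z = glue w <-> sum_dist0 z w.
Proof. by split => [/eqquotP|?]; [|apply/eqquotP]. Qed.

Lemma glue_repr (c : glued_space) : glue (repr c) = c.
Proof. exact: reprK. Qed.

Definition glued_dist (c c' : glued_space) : \bar R := sum_dist (repr c) (repr c').

Lemma glued_dist_glue z w : glued_dist (glue z) (glue w) = sum_dist z w.
Proof. by apply: (dist0_invariant sum_dist_tri); apply/glueP; rewrite glue_repr. Qed.

Lemma glue_fa_fb x : glue (inA (fa x)) = glue (inB (fb x)).
Proof.
by apply/glueP/dist0P; rewrite /= (cross_dist_fb fa_fb_dist) (cross_dist_fb fb_fa_dist) !mc_d_refl.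
Qed.

Lemma sum_dist0_cases z w : sum_dist0 z w -> w = z \/
  (exists x, z = inA (fa x) /\ w = inB (fb x)) \/
  (exists x, z = inB (fb x) /\ w = inA (fa x)).
Proof.
elim/sum_space_ind: z => a; elim/sum_space_ind: w => b /dist0P[/= zw wz].
- by left; congr inA; exact: mc_d_sep.
- by have [x [-> ->]] := cross_dist0_glued fa_cont fb_cont fa_fb_dist zw wz; right; left; exists x.
- by have [x [-> ->]] := cross_dist0_glued fb_cont fa_cont fb_fa_dist zw wz; right; right; exists x.
- by left; congr inB; exact: mc_d_sep.
Qed.

Lemma sum_dist0_partner z w w' : sum_dist0 z w -> sum_dist0 z w' -> w <> z -> w' <> z -> w = w'.
Proof.
move=> /sum_dist0_cases[->//|zw] /sum_dist0_cases[->//|zw'] _ _.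
have fa_inj : injective fa by case: fa_emb => _ [].
have fb_inj : injective fb by case: fb_emb => _ [].
case: zw zw' => [[x [-> ->]]|[x [-> ->]]] [[y [xy ->]]|[y [xy ->]]].
- by rewrite (fa_inj _ _ (existT_inj2 xy)).
- by move/(congr1 (@projT1 _ side)): xy.
- by move/(congr1 (@projT1 _ side)): xy.
- by rewrite (fb_inj _ _ (existT_inj2 xy)).
Qed.

(* Only the pairs [inA (fa x)], [inB (fb x)] are identified, so the complement
   of this set is [~` V] together with the images of two compact subsets of X. *)
Lemma open_glue_class_sub (V : set sum_space) : open V ->
  open [set z | forall w, glue w = glue z -> V w].
Proof.
move=> oV.
have sum_hausdorff : hausdorff_space sum_space.
  by apply: sigT_hausdorff => -[]; exact: mc_hausdorff.
have emb_cont i (g : X -> side i) : continuous g -> continuous (existT side i \o g).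
  by move=> gc x; apply: continuous_comp; [exact: gc | exact: existT_continuous].
have -> : [set z | forall w, glue w = glue z -> V w] =
    V `&` [set z | forall x, (inA \o fa) x = z -> V (inB (fb x))]
      `&` [set z | forall x, (inB \o fb) x = z -> V (inA (fa x))].
  apply/seteqP; split => [z Vz|z [[Vz VA] VB] w /glueP].
    by split; [split; first exact: Vz|] => x /= zx; apply: Vz; rewrite -zx glue_fa_fb.
  by rewrite dist0_sym => /sum_dist0_cases[->//|[] [x [zx ->]]]; [exact: VA | exact: VB].
have open_partner i j (g : X -> side i) (h : X -> side j) : continuous g -> continuous h ->
    open [set z | forall x, (existT side i \o g) x = z -> V (existT side j (h x))].
  move=> gc hc; apply: open_fibre_sub; [exact: mc_compact | exact: sum_hausdorff | exact: emb_cont |].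
  by apply: open_comp oV => x _; exact: emb_cont.
by apply: openI; [apply: openI|]; [|apply: open_partner..].
Qed.

Lemma nbhs_glue_class_sub (c : glued_space) (U : set sum_space) :
  (forall z, glue z = c -> nbhs z U) -> nbhs c [set c' | forall z, glue z = c' -> U z].
Proof.
move=> cU; pose O := [set c' : glued_space | forall z, glue z = c' -> U° z].
have oO : open O by exact: (open_glue_class_sub (open_interior U)).
by apply: filterS (open_nbhs_nbhs (conj oO cU)) => c' Oc' z /Oc'; exact: interior_subset.
Qed.

(* The fibres of [glue] have at most two points, so this intersection is finite. *)
Lemma nbhs_glue_fibreI (c : glued_space) (z : sum_space) (N : sum_space -> set sum_space) :
  (forall w, glue w = c -> nbhs z (N w)) -> nbhs z [set t | forall w, glue w = c -> N w t].
Proof.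
move=> zN; have cw0 := glue_repr c; set w0 := repr c in cw0.
have [[w1 [cw1 w10]]|only_w0] := pselect (exists w1, glue w1 = c /\ w1 <> w0).
  apply: filterS (filterI (zN w0 cw0) (zN w1 cw1)) => t [Nw0 Nw1] w cw.
  have [->//|w_w0] := pselect (w = w0).
  by rewrite (@sum_dist0_partner w0 w w1) //; apply/glueP; rewrite cw0.
apply: filterS (zN w0 cw0) => t Nw0 w cw.
have [->//|w_w0] := pselect (w = w0).
by exfalso; apply: only_w0; exists w.
Qed.

Lemma glued_dist_usc (r : R) :
  open [set p : glued_space * glued_space | r%:E < glued_dist p.1 p.2].
Proof.
rewrite openE => -[c c'] /= rc.
have /choice[N NP] : forall p : sum_space * sum_space,
    exists NN : set sum_space * set sum_space, glue p.1 = c -> glue p.2 = c' ->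
    [/\ nbhs p.1 NN.1, nbhs p.2 NN.2 &
      forall z' w', NN.1 z' -> NN.2 w' -> r%:E < sum_dist z' w'].
  move=> [z w]; have [[/= zc wc]|] := pselect (glue z = c /\ glue w = c'); last first.
    by move=> nzw; exists (setT, setT) => zc wc; exfalso; apply: nzw.
  have rzw : r%:E < sum_dist z w by rewrite -glued_dist_glue zc wc.
  have [V [[Nz Nw] /= [zNz wNw] NV] Vr] := @sum_dist_lsc (z, w) r rzw.
  by exists (Nz, Nw) => _ _; split => // z' w' ? ?; apply: (Vr (z', w')); exact: (NV (z', w')).
pose U := [set z' | exists2 z, glue z = c & forall w, glue w = c' -> (N (z, w)).1 z'].
pose U' := [set w' | exists2 w, glue w = c' & forall z, glue z = c -> (N (z, w)).2 w'].
have cU : nbhs c [set c1 | forall z, glue z = c1 -> U z].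
  apply: nbhs_glue_class_sub => z zc.
  apply: filterS (nbhs_glue_fibreI (c := c') (N := fun w => (N (z, w)).1) _) => [t Nt|w wc].
    by exists z.
  by case: (NP (z, w) zc wc).
have c'U' : nbhs c' [set c2 | forall w, glue w = c2 -> U' w].
  apply: nbhs_glue_class_sub => w wc.
  apply: filterS (nbhs_glue_fibreI (c := c) (N := fun z => (N (z, w)).2) _) => [t Nt|z zc].
    by exists w.
  by case: (NP (z, w) zc wc).
exists ([set c1 | forall z, glue z = c1 -> U z], [set c2 | forall w, glue w = c2 -> U' w]).
  exact: (conj cU c'U').
move=> [c1 c2] /= [c1U c2U'].
have [z zc Nz] := c1U _ (glue_repr c1); have [w wc Nw] := c2U' _ (glue_repr c2).
by case: (NP (z, w) zc wc) => _ _; apply; [exact: Nz | exact: Nw].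
Qed.

Lemma glued_compact : compact [set: glued_space].
Proof.
have -> : [set: glued_space] = glue @` [set: sum_space].
  by apply/seteqP; split => // c _; exists (repr c) => //; exact: glue_repr.
apply: continuous_compact; first exact/continuous_subspaceT/pi_continuous.
by apply: sigT_compact; [exact: finite_finset | case; exact: mc_compact].
Qed.

Lemma glued_dist_ge0 c c' : 0 <= glued_dist c c'.
Proof. exact: sum_dist_ge0. Qed.

Lemma glued_dist_refl c : glued_dist c c = 0.
Proof. exact: sum_dist_refl. Qed.

Lemma glued_dist_tri c c' c'' : glued_dist c c'' <= glued_dist c c' + glued_dist c' c''.
Proof. exact: sum_dist_tri. Qed.

Lemma glued_dist_sep c c' : glued_dist c c' = 0 -> glued_dist c' c = 0 -> c = c'.
Proof. by move=> cc' c'c; rewrite -(glue_repr c) -(glue_repr c'); apply/glueP/dist0P. Qed.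

Lemma glued_hausdorff : hausdorff_space glued_space.
Proof.
apply: (lower_semicontinuous_separated_hausdorff glued_dist_ge0 glued_dist_refl glued_dist_sep).
exact/lower_semicontinuousP/glued_dist_usc.
Qed.

Definition glued : metch R := MetCH glued_hausdorff glued_compact glued_dist_ge0
  glued_dist_refl glued_dist_tri glued_dist_sep glued_dist_usc.

Definition glueA : A -> glued := glue \o inA.
Definition glueB : B -> glued := glue \o inB.

Lemma glueA_mor : metch_mor glueA.
Proof.
split=> [a|a a']; last by rewrite /= glued_dist_glue.
by apply: continuous_comp; [exact: existT_continuous | exact: pi_continuous].
Qed.

Lemma glueB_mor : metch_mor glueB.
Proof.
split=> [b|b b']; last by rewrite /= glued_dist_glue.
by apply: continuous_comp; [exact: existT_continuous | exact: pi_continuous].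
Qed.

Lemma glueA_fa_glueB_fb : glueA \o fa = glueB \o fb.
Proof. by apply/funext => x; exact: glue_fa_fb. Qed.

Lemma pushout_sum_dist (P : metch R) (l0 : A -> P) (l1 : B -> P) :
  metch_pushout fa fb l0 l1 ->
  forall z w, mc_d (sum_map l0 l1 z) (sum_map l0 l1 w) = sum_dist z w.
Proof.
move=> [l0_mor l1_mor comm univ] z w; apply/le_anti/andP; split.
  elim/sum_space_ind: z => a; elim/sum_space_ind: w => b /=.
  - exact: l0_mor.2.
  - exact: cocone_dist_le_cross.
  - exact: cocone_dist_le_cross.
  - exact: l1_mor.2.
have [h [[[_ h_le] hl0 hl1] _]] := univ glued _ _ glueA_mor glueB_mor glueA_fa_glueB_fb.
have h_sum u : h (sum_map l0 l1 u) = glue u.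
  by elim/sum_space_ind: u => y; [exact: (congr1 (@^~ y) hl0) | exact: (congr1 (@^~ y) hl1)].
by rewrite -glued_dist_glue -!h_sum; exact: h_le.
Qed.

End Gluing.

Theorem corollary4p3 (R : realType) (X Y0 Y1 P : metch R)
  (f0 : X -> Y0) (f1 : X -> Y1) (l0 : Y0 -> P) (l1 : Y1 -> P) :
  metch_emb f0 -> metch_emb f1 -> metch_pushout f0 f1 l0 l1 ->
  [/\ (forall u v : Y0, @mc_d R P (l0 u) (l0 v) = @mc_d R Y0 u v),
      (forall u v : Y1, @mc_d R P (l1 u) (l1 v) = @mc_d R Y1 u v),
      (forall (u : Y0) (v : Y1), @mc_d R P (l0 u) (l1 v) =
         ereal_inf [set @mc_d R Y0 u (f0 x) + @mc_d R Y1 (f1 x) v | x in [set: X]]) &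
      (forall (u : Y1) (v : Y0), @mc_d R P (l1 u) (l0 v) =
         ereal_inf [set @mc_d R Y1 u (f1 x) + @mc_d R Y0 (f0 x) v | x in [set: X]])].
Proof.
move=> f0_emb f1_emb po; have d := pushout_sum_dist f0_emb f1_emb po.
split=> u v.
- exact: (d (inA _ u) (inA _ v)).
- exact: (d (inB _ u) (inB _ v)).
- exact: (d (inA _ u) (inB _ v)).
- exact: (d (inB _ u) (inA _ v)).
Qed.
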